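(* Let $L$ be a countable C-lattice domain in which every element is a join of principal elements. If $L$ is pseudo-Dedekind and Prüfer, then $L$ has finite character.
   Context: A multiplicative lattice is a complete lattice $(L,\le)$ with bottom $0$ and top $1$ which is also a commutative monoid with identity $1$ such that $a(\bigvee_\alpha b_\alpha)=\bigvee_\alpha(ab_\alpha)$ for all $a,b_\alpha\in L$. For $x,y\in L$, $(y:x)=\bigvee\{a\in L: ax\le y\}$. An element $c$ is compact if $c\le\bigvee S$ implies $c\le\bigvee T$ for some finite $T\subseteq S$. A C-lattice is a multiplicative lattice in which $1$ is compact, the product of two compact elements is compact, and every element is a join of compact elements. A proper element $p\ne1$ is prime if $xy\le p$ implies $x\le p$ or $y\le p$; maximal elements are maximal in $L\setminus\{1\}$; $L$ is a domain if $0$ is prime. An element $x$ is principal if $y\wedge zx=((y:x)\wedge z)x$ and $y\vee(z:x)=((yx\vee z):x)$ for all $y,z\in L$. $L$ is pseudo-Dedekind if $(x:a)$ is principal whenever $x,a\in L$ and $x$ is principal; $L$ is Prüfer if every compact element is principal; $L$ has finite character if every nonzero element is below only finitely many maximal elements. *)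

From Stdlib Require Import List.

Record MultLattice := {
  carrier :> Type;
  le : carrier -> carrier -> Prop;
  sup : (carrier -> Prop) -> carrier;
  mul : carrier -> carrier -> carrier;
  one : carrier;
  le_refl : forall x, le x x;
  le_antisym : forall x y, le x y -> le y x -> x = y;
  le_trans : forall x y z, le x y -> le y z -> le x z;
  sup_ub : forall (S : carrier -> Prop) x, S x -> le x (sup S);
  sup_least : forall (S : carrier -> Prop) y, (forall x, S x -> le x y) -> le (sup S) y;
  mul_assoc : forall a b c, mul a (mul b c) = mul (mul a b) c;
  mul_comm : forall a b, mul a b = mul b a;
  mul_one : forall a, mul a one = a;
  le_one : forall a, le a one;
  mul_sup : forall a (S : carrier -> Prop),
    mul a (sup S) = sup (fun y => exists b, S b /\ y = mul a b)
}.

Arguments le {m}.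
Arguments sup {m}.
Arguments mul {m}.
Arguments one {m}.

Section Defs.
Variable L : MultLattice.

Definition zero : L := sup (fun _ => False).
Definition join (a b : L) : L := sup (fun x => x = a \/ x = b).
Definition meet (a b : L) : L := sup (fun x => le x a /\ le x b).
Definition colon (y x : L) : L := sup (fun a => le (mul a x) y).

Definition compact (c : L) : Prop :=
  forall S : L -> Prop, le c (sup S) ->
    exists l : list L, (forall t, In t l -> S t) /\ le c (sup (fun t => In t l)).

Definition C_lattice : Prop :=
  compact one /\
  (forall a b, compact a -> compact b -> compact (mul a b)) /\
  (forall x : L, exists S : L -> Prop, (forall s, S s -> compact s) /\ x = sup S).

Definition prime (p : L) : Prop :=
  p <> one /\ forall x y, le (mul x y) p -> le x p \/ le y p.

Definition maximal (m : L) : Prop :=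
  m <> one /\ forall x, le m x -> x <> one -> x = m.

Definition is_domain : Prop := prime zero.

Definition principal (x : L) : Prop :=
  forall y z : L,
    meet y (mul z x) = mul (meet (colon y x) z) x /\
    join y (colon z x) = colon (join (mul y x) z) x.

Definition pseudo_Dedekind : Prop :=
  forall x a : L, principal x -> principal (colon x a).

Definition Prufer : Prop := forall c : L, compact c -> principal c.

Definition finite_character : Prop :=
  forall x : L, x <> zero ->
    exists l : list L, forall m, maximal m -> le x m -> In m l.

Definition countable_lattice : Prop :=
  exists f : nat -> L, forall x, exists n, f n = x.

Definition joins_of_principals : Prop :=
  forall x : L, exists S : L -> Prop, (forall s, S s -> principal s) /\ x = sup S.

End Defs.

(** Suppose a nonzero [x] lies below infinitely many maximal elements and pick a
    nonzero compact [p <= x].  Separating maximal elements by compact elements,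
    one builds a sequence [e_0, e_1, ...] of proper compact, hence principal,
    elements above [p] which are pairwise comaximal.  Enumerate [L] as
    [f_0, f_1, ...] and let [F] be the meet of the [e_k] with [f_k] not below
    [e_k].  Pseudo-Dedekindness makes [F = (p : (p : F))] principal, so
    [F = f_j] for some [j].  Then [F <= e_j], comaximality forces
    [(F : e_j) <= F], hence [F e_j = F], and cancelling the principal element
    [F] in the domain gives [e_j = 1]. *)

From Stdlib Require Import List Classical ClassicalEpsilon PeanoNat Lia.

Section Lattice.
Variable L : MultLattice.

Lemma sup_mono (S T : L -> Prop) : (forall x, S x -> T x) -> le (sup S) (sup T).
Proof. intros H. apply sup_least. intros x Hx. apply sup_ub. auto. Qed.

Lemma zero_le (a : L) : le (zero L) a.
Proof. apply sup_least. intros x []. Qed.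

Lemma le_zero_eq (a : L) : le a (zero L) -> a = zero L.
Proof. intros H. apply le_antisym; auto using zero_le. Qed.

Lemma le_one_eq (a : L) : le one a -> a = one.
Proof. intros H. apply le_antisym; auto using le_one. Qed.

Lemma join_l (a b : L) : le a (join L a b).
Proof. apply sup_ub. auto. Qed.

Lemma join_r (a b : L) : le b (join L a b).
Proof. apply sup_ub. auto. Qed.

Lemma join_least (a b c : L) : le a c -> le b c -> le (join L a b) c.
Proof. intros. apply sup_least. intros x [-> | ->]; auto. Qed.

Lemma join_comm (a b : L) : join L a b = join L b a.
Proof. apply le_antisym; apply join_least; auto using join_l, join_r. Qed.

Lemma join_of_le (a b : L) : le a b -> join L a b = b.
Proof. intros. apply le_antisym; auto using join_least, le_refl, join_r. Qed.

Lemma join_zero_r (a : L) : join L a (zero L) = a.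
Proof. rewrite join_comm. apply join_of_le, zero_le. Qed.

Lemma meet_l (a b : L) : le (meet L a b) a.
Proof. apply sup_least. intros x [H _]. exact H. Qed.

Lemma meet_glb (a b c : L) : le c a -> le c b -> le c (meet L a b).
Proof. intros. apply sup_ub. auto. Qed.

Lemma meet_of_le (a b : L) : le a b -> meet L a b = a.
Proof. intros. apply le_antisym; auto using meet_l, meet_glb, le_refl. Qed.

Lemma one_mul (a : L) : mul one a = a.
Proof. rewrite mul_comm. apply mul_one. Qed.

Lemma mul_join (c a b : L) : mul c (join L a b) = join L (mul c a) (mul c b).
Proof.
  unfold join at 1. rewrite mul_sup. apply le_antisym.
  - apply sup_least. intros y [t [[-> | ->] ->]]; auto using join_l, join_r.
  - apply join_least; apply sup_ub; eauto.
Qed.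

Lemma mul_mono_r (c a b : L) : le a b -> le (mul c a) (mul c b).
Proof.
  intros H. rewrite <- (join_of_le a b H), mul_join. apply join_l.
Qed.

Lemma mul_mono_l (c a b : L) : le a b -> le (mul a c) (mul b c).
Proof. intros H. rewrite (mul_comm L a), (mul_comm L b). apply mul_mono_r, H. Qed.

Lemma mul_le_l (a b : L) : le (mul a b) a.
Proof. rewrite <- (mul_one L a) at 2. apply mul_mono_r, le_one. Qed.

Lemma mul_le_r (a b : L) : le (mul a b) b.
Proof. rewrite mul_comm. apply mul_le_l. Qed.

Lemma colon_ub (a y x : L) : le (mul a x) y -> le a (colon L y x).
Proof. intros. apply sup_ub. auto. Qed.

Lemma colon_mul (y x : L) : le (mul (colon L y x) x) y.
Proof.
  rewrite mul_comm. unfold colon. rewrite mul_sup. apply sup_least.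
  intros z [b [Hb ->]]. rewrite mul_comm. exact Hb.
Qed.

Lemma colon_anti (y x x' : L) : le x x' -> le (colon L y x') (colon L y x).
Proof.
  intros H. apply colon_ub. eapply le_trans; [apply mul_mono_r, H | apply colon_mul].
Qed.

Lemma comaximal_mono (a a' b : L) : le a a' -> join L a b = one -> join L a' b = one.
Proof.
  intros Ha Hab. apply le_one_eq. rewrite <- Hab.
  apply join_least; [eapply le_trans; [exact Ha | apply join_l] | apply join_r].
Qed.

Lemma comaximal_absorb (a b g : L) : join L a b = one -> le (mul g b) a -> le g a.
Proof.
  intros Hab Hgb. rewrite <- (mul_one L g), <- Hab, mul_join.
  apply join_least; [apply mul_le_r | exact Hgb].
Qed.

Lemma maximal_join_one (m b : L) : maximal L m -> ~ le b m -> join L m b = one.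
Proof.
  intros [_ Hm] Hb. apply NNPP. intros H. apply Hb.
  rewrite <- (Hm _ (join_l m b) H). apply join_r.
Qed.

Definition infimum (S : L -> Prop) : L := sup (fun y => forall s, S s -> le y s).

Lemma infimum_lb (S : L -> Prop) (s : L) : S s -> le (infimum S) s.
Proof. intros Hs. apply sup_least. auto. Qed.

Lemma infimum_glb (S : L -> Prop) (y : L) : (forall s, S s -> le y s) -> le y (infimum S).
Proof. intros H. apply sup_ub. exact H. Qed.

End Lattice.

Section Principal.
Variable L : MultLattice.
Hypothesis domain : is_domain L.

Lemma principal_le_factor (x y : L) : principal L x -> le y x -> y = mul (colon L y x) x.
Proof.
  intros Px Hyx. destruct (Px y one) as [H _].
  rewrite one_mul, (meet_of_le L y x Hyx), meet_of_le in H by apply le_one.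
  exact H.
Qed.

Lemma colon_zero (x : L) : x <> zero L -> colon L (zero L) x = zero L.
Proof.
  intros Hx. apply le_zero_eq. apply sup_least. intros a Ha.
  destruct (proj2 domain a x Ha) as [Ha0 | Hx0]; [exact Ha0 |].
  exfalso. apply Hx, le_zero_eq, Hx0.
Qed.

Lemma principal_cancel (x y : L) : principal L x -> x <> zero L -> colon L (mul y x) x = y.
Proof.
  intros Px Hx. destruct (Px y (zero L)) as [_ H].
  rewrite colon_zero, !join_zero_r in H by exact Hx. symmetry. exact H.
Qed.

Lemma principal_factor_absorbed (F g e : L) :
  principal L F -> F <> zero L -> F = mul g e -> le g F -> e = one.
Proof.
  intros PF HF Hge HgF.
  assert (HeF : mul e F = F).
  { apply le_antisym; [apply mul_le_r |].
    rewrite Hge at 1. rewrite (mul_comm L e). apply mul_mono_l, HgF. }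
  rewrite <- (principal_cancel F e PF HF), HeF, <- (one_mul L F) at 1.
  apply principal_cancel; assumption.
Qed.

Hypothesis pseudo_dedekind : pseudo_Dedekind L.

Lemma colon_colon_of_le (p s : L) :
  principal L p -> p <> zero L -> principal L s -> le p s -> colon L p (colon L p s) = s.
Proof.
  intros Pp Hp Ps Hps. set (r := colon L p s).
  assert (Hpr : p = mul r s) by (apply principal_le_factor; assumption).
  assert (Hr : r <> zero L).
  { intros H0. apply Hp, le_zero_eq. rewrite <- H0. apply colon_ub, mul_le_l. }
  rewrite Hpr at 1. rewrite mul_comm. apply principal_cancel; [apply pseudo_dedekind, Pp | exact Hr].
Qed.

(** [F = (p : (p : F))], and the right-hand side is principal by pseudo-Dedekindness. *)
Lemma principal_infimum (p : L) (S : L -> Prop) :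
  principal L p -> p <> zero L -> (forall s, S s -> principal L s /\ le p s) ->
  principal L (infimum L S).
Proof.
  intros Pp Hp HS.
  assert (E : infimum L S = colon L p (colon L p (infimum L S))).
  { apply le_antisym.
    - apply colon_ub. rewrite mul_comm. apply colon_mul.
    - apply infimum_glb. intros s Hs. destruct (HS s Hs) as [Ps Hps].
      rewrite <- (colon_colon_of_le p s Pp Hp Ps Hps).
      apply colon_anti, colon_anti, infimum_lb, Hs. }
  rewrite E. apply pseudo_dedekind, Pp.
Qed.

Lemma no_comaximal_principal_sequence (p : L) (e : nat -> L) :
  countable_lattice L -> principal L p -> p <> zero L ->
  (forall n, principal L (e n) /\ le p (e n) /\ e n <> one) ->
  (forall i j, i <> j -> join L (e i) (e j) = one) -> False.
Proof.
  intros [f Hf] Pp Hp He Hcomax.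
  set (D := fun k => ~ le (f k) (e k)).
  set (F := infimum L (fun y => exists k, D k /\ y = e k)).
  assert (FD : forall k, D k -> le F (e k)) by (intros; apply infimum_lb; eauto).
  assert (PF : principal L F).
  { apply principal_infimum with p; auto. intros s [k [_ ->]]. split; apply He. }
  assert (HF : F <> zero L).
  { intros HF0. apply Hp, le_zero_eq. rewrite <- HF0.
    apply infimum_glb. intros s [k [_ ->]]. apply He. }
  destruct (Hf F) as [j Hj].
  destruct (classic (D j)) as [Dj | Dj]; [apply Dj; rewrite Hj; apply FD, Dj |].
  assert (Fj : le F (e j)) by (rewrite <- Hj; apply NNPP, Dj).
  apply (proj2 (proj2 (He j))).
  apply (principal_factor_absorbed F (colon L F (e j)) (e j) PF HF).
  - apply principal_le_factor; [apply He | exact Fj].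
  - apply infimum_glb. intros s [k [Dk ->]].
    apply (comaximal_absorb L (e k) (e j)).
    + apply Hcomax. intros ->. contradiction.
    + eapply le_trans; [apply colon_mul | apply FD, Dk].
Qed.

End Principal.

Section Compact.
Variable L : MultLattice.

Lemma compact_zero : compact L (zero L).
Proof. intros S _. exists nil. split; [intros t [] | apply zero_le]. Qed.

Lemma compact_join (a b : L) : compact L a -> compact L b -> compact L (join L a b).
Proof.
  intros Ca Cb S H.
  destruct (Ca S) as [l1 [H1 H1']]; [eapply le_trans; [apply join_l | exact H] |].
  destruct (Cb S) as [l2 [H2 H2']]; [eapply le_trans; [apply join_r | exact H] |].
  exists (l1 ++ l2). split.
  - intros t Ht. apply in_app_or in Ht. destruct Ht; auto.
  - apply join_least; (eapply le_trans; [eassumption |]);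
      apply sup_mono; intros; apply in_or_app; auto.
Qed.

Lemma compact_cover_list (S : L -> Prop) (b : L) (l : list L) :
  (forall s, S s -> compact L s) -> (forall t, In t l -> S t \/ t = b) ->
  exists c, compact L c /\ le c (sup S) /\ le (sup (fun t => In t l)) (join L c b).
Proof.
  intros CS. induction l as [|a l IH]; intros Hl.
  - exists (zero L). split; [apply compact_zero |].
    split; [apply zero_le | apply sup_least; intros x []].
  - destruct IH as [c [Cc [Hc Hlc]]]; [intros t Ht; apply Hl; right; exact Ht |].
    assert (Hl' : le (sup (fun t => In t l)) (join L (join L c a) b)).
    { eapply le_trans; [exact Hlc |]. apply join_least; [| apply join_r].
      eapply le_trans; [apply join_l | apply join_l]. }
    destruct (Hl a (or_introl eq_refl)) as [Sa | ->].
    + exists (join L c a). split; [apply compact_join; auto |].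
      split; [apply join_least; [exact Hc | apply sup_ub, Sa] |].
      apply sup_least. intros t [<- | Ht].
      * eapply le_trans; [apply join_r | apply join_l].
      * eapply le_trans; [apply sup_ub with (S := fun t => In t l), Ht | exact Hl'].
    + exists c. split; [exact Cc |]. split; [exact Hc |].
      apply sup_least. intros t [<- | Ht]; [apply join_r |].
      eapply le_trans; [apply sup_ub with (S := fun t => In t l), Ht | exact Hlc].
Qed.

Hypothesis C_lat : C_lattice L.

Lemma nonzero_compact_below (x : L) :
  x <> zero L -> exists p, compact L p /\ le p x /\ p <> zero L.
Proof.
  intros Hx. destruct C_lat as [_ [_ C3]]. destruct (C3 x) as [S [CS HS]].
  apply NNPP. intros H. apply Hx. rewrite HS. apply le_zero_eq, sup_least.
  intros s Ss. destruct (classic (s = zero L)) as [-> | Hs]; [apply le_refl |].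
  exfalso. apply H. exists s. rewrite HS. auto using sup_ub.
Qed.

Lemma compact_comaximal_below (x b : L) :
  join L x b = one -> exists c, compact L c /\ le c x /\ join L c b = one.
Proof.
  intros Hxb. destruct C_lat as [C1 [_ C3]]. destruct (C3 x) as [S [CS ->]].
  destruct (C1 (fun t => S t \/ t = b)) as [l [Hl Hone]].
  { rewrite <- Hxb. apply join_least; [apply sup_mono; auto | apply sup_ub; auto]. }
  destruct (compact_cover_list S b l CS Hl) as [c [Cc [Hc Hlc]]].
  exists c. split; [exact Cc |]. split; [exact Hc |].
  apply le_one_eq. eapply le_trans; eassumption.
Qed.

Lemma compact_comaximal_below_list (x : L) (B : list L) :
  (forall b, In b B -> join L x b = one) ->
  exists c, compact L c /\ le c x /\ forall b, In b B -> join L c b = one.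
Proof.
  induction B as [|b B IH]; intros HB.
  - exists (zero L). split; [apply compact_zero |]. split; [apply zero_le | intros b []].
  - destruct IH as [c1 [C1 [Hc1 H1]]]; [intros; apply HB; right; assumption |].
    destruct (compact_comaximal_below x b) as [c2 [C2 [Hc2 H2]]]; [apply HB; left; reflexivity |].
    exists (join L c1 c2). split; [apply compact_join; assumption |].
    split; [apply join_least; assumption |].
    intros b' [<- | Hb'].
    + apply comaximal_mono with c2; [apply join_r | exact H2].
    + apply comaximal_mono with c1; [apply join_l | apply H1, Hb'].
Qed.

End Compact.

Section FiniteSet.
Variable L : MultLattice.

Definition finite_set (Y : L -> Prop) : Prop := exists l : list L, forall m, Y m -> In m l.

Lemma not_finite_set_outside (Y : L -> Prop) :
  ~ finite_set Y -> forall l, exists m, Y m /\ ~ In m l.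
Proof.
  intros H l. apply NNPP. intros H'. apply H. exists l. intros m Ym.
  apply NNPP. intros Hm. apply H'. exists m. auto.
Qed.

Lemma finite_set_union (Y Y1 Y2 : L -> Prop) :
  finite_set Y1 -> finite_set Y2 -> (forall m, Y m -> Y1 m \/ Y2 m) -> finite_set Y.
Proof.
  intros [l1 H1] [l2 H2] H. exists (l1 ++ l2). intros m Ym.
  apply in_or_app. destruct (H m Ym); auto.
Qed.

Lemma finite_set_sub (Y Y' : L -> Prop) :
  (forall m, Y m -> Y' m) -> finite_set Y' -> finite_set Y.
Proof. intros H [l Hl]. exists l. auto. Qed.

End FiniteSet.

Section ComaximalSequence.
Variable L : MultLattice.
Variable p : L.
Hypothesis C_lat : C_lattice L.
Hypothesis compact_p : compact L p.

Definition avoiding (E : list L) (m : L) : Prop :=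
  maximal L m /\ le p m /\ forall e, In e E -> ~ le e m.

Definition proper_extension (E : list L) (e : L) : Prop :=
  compact L e /\ le p e /\ e <> one /\ forall e', In e' E -> join L e e' = one.

Definition good_extension (E : list L) (e : L) : Prop :=
  proper_extension E e /\ ~ finite_set L (avoiding (e :: E)).

Lemma proper_extension_join (E : list L) (c m : L) :
  compact L c -> le c m -> maximal L m -> le p m ->
  (forall e', In e' E -> join L c e' = one) -> proper_extension E (join L p c).
Proof.
  intros Cc Hcm Mm Hpm HE. split; [apply compact_join; assumption |].
  split; [apply join_l |]. split.
  - intros H. apply (proj1 Mm), le_one_eq. rewrite <- H. apply join_least; assumption.
  - intros e' He'. apply comaximal_mono with c; [apply join_r | apply HE, He'].
Qed.

Lemma avoiding_split (E : list L) (d d' : L) :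
  join L d d' = one -> forall m, avoiding E m ->
  avoiding (join L p d :: E) m \/ avoiding (join L p d' :: E) m.
Proof.
  intros Hdd' m [Mm [Hpm HEm]].
  destruct (classic (le (join L p d) m)) as [H1 | H1];
    [destruct (classic (le (join L p d') m)) as [H2 | H2] |].
  - exfalso. apply (proj1 Mm), le_one_eq. rewrite <- Hdd'.
    apply join_least; (eapply le_trans; [apply join_r | eassumption]).
  - right. split; [exact Mm |]. split; [exact Hpm |]. intros e [<- | He]; auto.
  - left. split; [exact Mm |]. split; [exact Hpm |]. intros e [<- | He]; auto.
Qed.

(** Two maximal elements [n <> n'] avoiding [E] are separated by compact
    [d <= n] and [d' <= n'] with [d ∨ d' = 1]; every maximal element avoiding
    [E] avoids [p ∨ d] or [p ∨ d'], so one of them still has infinitely many. *)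
Lemma good_extension_exists (E : list L) :
  ~ finite_set L (avoiding E) -> exists e, good_extension E e.
Proof.
  intros HE.
  destruct (not_finite_set_outside L _ HE nil) as [n [[Mn [Hpn HEn]] _]].
  destruct (not_finite_set_outside L _ HE (n :: nil)) as [n' [[Mn' [Hpn' HEn']] Hn'n]].
  assert (Hn'n_le : ~ le n' n).
  { intros H. apply Hn'n. left. apply (proj2 Mn' n H (proj1 Mn)). }
  destruct (compact_comaximal_below_list L C_lat n (n' :: E)) as [d [Cd [Hdn Hd]]].
  { intros b [<- | Hb]; apply maximal_join_one; auto. }
  assert (Hdn' : ~ le d n').
  { intros H. apply (proj1 Mn'). rewrite <- (Hd n' (or_introl eq_refl)).
    symmetry. apply join_of_le, H. }
  destruct (compact_comaximal_below_list L C_lat n' (d :: E)) as [d' [Cd' [Hd'n' Hd']]].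
  { intros b [<- | Hb]; apply maximal_join_one; auto. }
  assert (Hdd' : join L d d' = one).
  { rewrite join_comm. apply Hd'. left. reflexivity. }
  destruct (classic (finite_set L (avoiding (join L p d :: E)))) as [F1 | I1];
    [destruct (classic (finite_set L (avoiding (join L p d' :: E)))) as [F2 | I2] |].
  - exfalso. apply HE. apply (finite_set_union L _ _ _ F1 F2), avoiding_split, Hdd'.
  - exists (join L p d'). split; [| exact I2].
    apply proper_extension_join with n'; auto. intros; apply Hd'; right; assumption.
  - exists (join L p d). split; [| exact I1].
    apply proper_extension_join with n; auto. intros; apply Hd; right; assumption.
Qed.

Definition next_element (E : list L) : L := epsilon (inhabits one) (good_extension E).

Fixpoint chosen (n : nat) : list L :=
  match n with
  | O => nil
  | S k => next_element (chosen k) :: chosen k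
  end.

Lemma next_element_good (E : list L) :
  ~ finite_set L (avoiding E) -> good_extension E (next_element E).
Proof. intros HE. exact (epsilon_spec _ _ (good_extension_exists E HE)). Qed.

Hypothesis infinitely_many : ~ finite_set L (avoiding nil).

Lemma chosen_infinite (n : nat) : ~ finite_set L (avoiding (chosen n)).
Proof.
  induction n as [|n IH]; [exact infinitely_many |].
  exact (proj2 (next_element_good _ IH)).
Qed.

Lemma next_element_in_chosen (i j : nat) : i < j -> In (next_element (chosen i)) (chosen j).
Proof.
  induction j as [|j IH]; intros Hij; [inversion Hij |].
  destruct (Nat.eq_dec i j) as [-> | Hne]; [left; reflexivity |].
  right. apply IH. lia.
Qed.

Lemma comaximal_sequence :
  exists e : nat -> L, (forall n, compact L (e n) /\ le p (e n) /\ e n <> one) /\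
    (forall i j, i <> j -> join L (e i) (e j) = one).
Proof.
  exists (fun n => next_element (chosen n)). split.
  - intros n. destruct (next_element_good _ (chosen_infinite n)) as [[Ce [Hpe [He _]]] _]. auto.
  - assert (Hlt : forall i j, i < j ->
              join L (next_element (chosen j)) (next_element (chosen i)) = one).
    { intros i j Hij. apply (next_element_good _ (chosen_infinite j)), next_element_in_chosen, Hij. }
    intros i j Hij. destruct (Nat.lt_total i j) as [H | [H | H]].
    + rewrite join_comm. apply Hlt, H.
    + contradiction.
    + apply Hlt, H.
Qed.

End ComaximalSequence.

Theorem proposition3p14 (L : MultLattice) :
  countable_lattice L -> C_lattice L -> is_domain L -> joins_of_principals L ->
  pseudo_Dedekind L -> Prufer L -> finite_character L.
Proof.
  (* Compact elements are already principal by the Prüfer hypothesis. *)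
  intros Hcount C_lat domain _ pseudo_dedekind prufer x Hx.
  destruct (classic (finite_set L (fun m => maximal L m /\ le x m))) as [[l Hl] | Hinf];
    [exists l; auto |].
  exfalso.
  destruct (nonzero_compact_below L C_lat x Hx) as [p [Cp [Hpx Hp]]].
  assert (Hinf_p : ~ finite_set L (avoiding L p nil)).
  { intros Hfin. apply Hinf. apply (finite_set_sub L) with (avoiding L p nil); [| exact Hfin].
    intros m [Mm Hxm]. split; [exact Mm |].
    split; [eapply le_trans; eassumption | intros e []]. }
  destruct (comaximal_sequence L p C_lat Cp Hinf_p) as [e [He Hcomax]].
  apply (no_comaximal_principal_sequence L domain pseudo_dedekind p e Hcount); auto.
  intros n. destruct (He n) as [Ce [Hpe He1]]. auto.
Qed.
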